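(* Let $p(n)$ be the number of partitions of $n$. For $k\ge1$ let $\mathcal{E}_k(x)=[q^x]\prod_{i=1}^{k}(1-q^i)^{-2}$ for integers $x\ge0$. Then for each $k$, $\mathcal{E}_k$ coincides for all integers $x\ge 0$ with a single quasi-polynomial in $x$ (whose constituent polynomial depends only on the residue class of $x$ modulo $L_k=\operatorname{lcm}(1,\dots,k)$), and for every integer $n\ge1$, $$p(n)=\sum_{k=1}^{\lfloor\sqrt n\rfloor}\mathcal{E}_k(n-k^2).$$
   Context: $[q^x]F(q)$ denotes the coefficient of $q^x$ in the power series $F(q)$. *)

From HB Require Import structures.
From mathcomp Require Import all_boot all_order all_algebra.
Set Implicit Arguments. Unset Strict Implicit. Unset Printing Implicit Defensive.
Import Order.TTheory GRing.Theory Num.Theory.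
Local Open Scope ring_scope.

Definition is_partition (n : nat) (s : seq nat) : bool :=
  [&& sorted geq s, all (fun x => 0 < x)%N s & sumn s == n].

(** p(n): every partition of n has length l <= n and parts <= n, so we count
    the l-tuples of elements of 'I_(n+1) forming a partition, for l <= n. *)
Definition npart (n : nat) : nat :=
  (\sum_(l < n.+1) #|[set t : l.-tuple 'I_n.+1 | is_partition n (map val t)]|)%N.

Definition pser := nat -> int.

Definition coef_ps (F : pser) (n : nat) : int := F n.

Definition ps_one : pser := fun n => if n == 0%N then 1 else 0.
Definition ps_sub (F G : pser) : pser := fun n => F n - G n.
Definition ps_mono (i : nat) : pser := fun n => if n == i then 1 else 0.
Definition ps_mul (F G : pser) : pser :=
  fun n => \sum_(j < n.+1) F j * G (n - j)%N.

(** Multiplicative inverse of a power series with constant term 1: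
    G_0 = 1, G_{m+1} = - \sum_{j=0}^{m} F_{j+1} G_{m-j}. *)
Fixpoint ps_inv_upto (F : pser) (m : nat) : seq int :=
  match m with
  | 0 => [:: 1]
  | m'.+1 => let s := ps_inv_upto F m' in
             rcons s (- \sum_(j < m'.+1) F j.+1 * nth 0 s (m' - j)%N)
  end.
Definition ps_inv (F : pser) : pser := fun n => nth 0 (ps_inv_upto F n) n.

Definition Eprod (k : nat) : pser :=
  \big[ps_mul/ps_one]_(1 <= i < k.+1)
     (let g := ps_inv (ps_sub ps_one (ps_mono i)) in ps_mul g g).

Definition Ek (k x : nat) : int := coef_ps (Eprod k) x.

Definition Lk (k : nat) : nat := (\big[lcmn/1]_(1 <= i < k.+1) i)%N.

From HB Require Import structures.
From mathcomp Require Import all_boot all_order all_algebra.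
From mathcomp Require Import zify ring.
Set Implicit Arguments. Unset Strict Implicit. Unset Printing Implicit Defensive.
Import Order.TTheory GRing.Theory Num.Theory.
Local Open Scope ring_scope.

(* Quasi-polynomiality: with L = L_k every i <= k divides L, so
     (1 - q^L)^(2k) \prod_(i <= k) (1 - q^i)^-2 = \prod_(i <= k) ((1 - q^L)/(1 - q^i))^2
   is a polynomial of degree at most 2k(L - 1).  Hence, for each residue r,
   the (2k)-th forward difference of m |-> E_k(r + m L) vanishes, and Newton's
   forward-difference formula makes E_k(r + m L) a polynomial in m = (x - r) / L.

   Partition identity: classify the partitions of n by the side k of their
   Durfee square.  Removing the k x k square leaves a partition into at most k
   parts (right of the square) and a partition into parts at most k (below
   it); for the sizes that occur, both are counted by the coefficients of
   \prod_(i <= k) (1 - q^i)^-1, which yields E_k(n - k^2).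

   Power series are compared through their polynomial truncations mod q^N. *)

(** * Power series and their truncations *)

Lemma size_ps_inv_upto F m : size (ps_inv_upto F m) = m.+1.
Proof. by elim: m => //= m IH; rewrite size_rcons IH. Qed.

Lemma nth_ps_inv_upto F m n :
  (n <= m)%N -> nth 0 (ps_inv_upto F m) n = ps_inv F n.
Proof.
elim: m => [|m IH]; first by rewrite leqn0 => /eqP ->.
rewrite leq_eqVlt => /predU1P[-> //|lt_nm].
by rewrite /= nth_rcons size_ps_inv_upto lt_nm IH.
Qed.

Lemma ps_invS F m :
  ps_inv F m.+1 = - \sum_(j < m.+1) F j.+1 * ps_inv F (m - j)%N.
Proof.
rewrite /ps_inv /= nth_rcons size_ps_inv_upto ltnn eqxx.
by congr (- _); apply: eq_bigr => j _; rewrite nth_ps_inv_upto ?leq_subr.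
Qed.

Lemma ps_inv_geom i n :
  (0 < i)%N -> ps_inv (ps_sub ps_one (ps_mono i)) n = (i %| n)%:R.
Proof.
move=> i_gt0; elim/ltn_ind: n => -[_|m IH]; first by rewrite dvdn0.
have coefS j : ps_sub ps_one (ps_mono i) j.+1 = - (j.+1 == i)%:R.
  by rewrite /ps_sub /ps_one /ps_mono sub0r; case: eqP.
rewrite ps_invS; under eq_bigr => j _ do rewrite coefS mulNr.
rewrite sumrN opprK.
have [lt_m_i | le_i_m] := ltnP m.+1 i.
  rewrite gtnNdvd // big1 // => j _.
  by rewrite ltn_eqF ?mul0r // (leq_ltn_trans (ltn_ord j) lt_m_i).
have lt_i_m : (i.-1 < m.+1)%N by rewrite prednK.
rewrite (bigD1 (Ordinal lt_i_m)) //= prednK // eqxx mul1r big1 ?addr0 => [|j].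
  rewrite IH; last by rewrite ltnS leq_subr.
  by rewrite -subSS prednK // -[in RHS](subnK le_i_m) dvdn_addl.
rewrite -val_eqE /= => ij; rewrite (_ : (j.+1 == i) = false) ?mul0r //.
by apply: contraNF ij => /eqP <-.
Qed.

Section TruncatedSeries.
Variable R : comNzRingType.
Implicit Types P Q : {poly R}.

Definition eq_modX N P Q := forall s, (s < N)%N -> P`_s = Q`_s.

Lemma eq_modX_refl N P : eq_modX N P P.
Proof. by []. Qed.

Lemma eq_modX_mul N P P' Q Q' :
  eq_modX N P P' -> eq_modX N Q Q' -> eq_modX N (P * Q) (P' * Q').
Proof.
move=> PP' QQ' s lt_sN; rewrite !coefM; apply: eq_bigr => j _.
have lt_jN : (j < N)%N by rewrite (leq_ltn_trans _ lt_sN) // -ltnS.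
by rewrite PP' ?QQ' // (leq_ltn_trans (leq_subr _ _) lt_sN).
Qed.

Definition geom_trunc (i N : nat) : {poly R} := \poly_(j < N) (i %| j)%:R.

Lemma geom_truncK i N : (0 < i)%N -> eq_modX N ((1 - 'X^i) * geom_trunc i N) 1.
Proof.
move=> i_gt0 s lt_sN; rewrite mulrBl mul1r coefB coefXnM !coef_poly coef1 lt_sN.
case: s lt_sN => [|s] lt_sN; first by rewrite i_gt0 dvdn0 subr0.
have [lt_si | le_is] := ltnP s.+1 i; first by rewrite gtnNdvd // subr0.
by rewrite (leq_ltn_trans (leq_subr _ _) lt_sN) -{1}(subnK le_is) dvdn_addl // subrr.
Qed.

Definition geom_sum (i L : nat) : {poly R} := \sum_(j < L %/ i) 'X^(i * j).

Lemma geom_sumK i L : (i %| L)%N -> (1 - 'X^i) * geom_sum i L = 1 - 'X^L.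
Proof.
move=> dvd_iL; have -> : 'X^L = ('X^i) ^+ (L %/ i) :> {poly R}.
  by rewrite -exprM mulnC divnK.
rewrite /geom_sum (eq_bigr (fun j : 'I_(L %/ i) => ('X^i) ^+ j)) => [|j _].
  by rewrite -[RHS]opprB subrX1 -mulNr opprB.
exact: exprM.
Qed.

Lemma size_geom_sum i L : (size (geom_sum i L) <= L)%N.
Proof.
apply: leq_trans (size_sum _ _ _) _.
apply/bigmax_leqP => j _; rewrite size_polyXn.
have := leq_divM L i; have := ltn_ord j; nia.
Qed.

Lemma eq_modX_geom_sum N i L : (0 < i)%N -> (i %| L)%N ->
  eq_modX N ((1 - 'X^L) * geom_trunc i N) (geom_sum i L).
Proof.
move=> i_gt0 dvd_iL; rewrite -[geom_sum i L]mulr1 -(geom_sumK dvd_iL).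
rewrite [(1 - _) * _]mulrC -mulrA.
by apply: eq_modX_mul; [exact: eq_modX_refl | exact: geom_truncK].
Qed.

End TruncatedSeries.

Lemma size_prod_leq (R : nzRingType) (I : Type) (r : seq I) (P : pred I)
    (F : I -> {poly R}) :
  ((size (\prod_(i <- r | P i) F i)%R).-1 <= \sum_(i <- r | P i) (size (F i)).-1)%N.
Proof.
apply: (big_ind2 (fun (p : {poly R}) n => (size p).-1 <= n)%N) => [|p m q n|//].
  by rewrite size_poly1.
have [->|p0] := eqVneq p 0; first by rewrite mul0r size_poly0.
have [->|q0] := eqVneq q 0; first by rewrite mulr0 size_poly0.
move: (size_polyMleq p q); rewrite -!size_poly_gt0 in p0 q0; lia.
Qed.

Definition ps_eq_modX N (F : pser) (P : {poly int}) :=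
  forall s, (s < N)%N -> F s = P`_s.

Lemma ps_eq_modX_mul N F G P Q :
  ps_eq_modX N F P -> ps_eq_modX N G Q -> ps_eq_modX N (ps_mul F G) (P * Q).
Proof.
move=> FP GQ s lt_sN; rewrite coefM; apply: eq_bigr => j _.
have lt_jN : (j < N)%N by rewrite (leq_ltn_trans _ lt_sN) // -ltnS.
by rewrite FP ?GQ // (leq_ltn_trans (leq_subr _ _) lt_sN).
Qed.

Definition euler_trunc (k N : nat) : {poly int} :=
  \prod_(1 <= i < k.+1) geom_trunc int i N.

Lemma Ek_euler_trunc k N x : (x < N)%N -> Ek k x = (euler_trunc k N ^+ 2)`_x.
Proof.
move=> lt_xN; rewrite /Ek /coef_ps -prodrXl.
suff FP : ps_eq_modX N (Eprod k) (\prod_(1 <= i < k.+1) geom_trunc int i N ^+ 2).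
  exact: FP.
rewrite /Eprod big_seq [X in ps_eq_modX _ _ X]big_seq.
apply: (big_ind2 (ps_eq_modX N)) => [s _|F P G Q|i].
- by rewrite coef1 /ps_one; case: eqP.
- exact: ps_eq_modX_mul.
rewrite mem_index_iota => /andP[i_gt0 _]; rewrite expr2.
by apply: ps_eq_modX_mul => s lt_sN; rewrite coef_poly lt_sN ps_inv_geom.
Qed.

Lemma coef_euler_trunc0 N s : (euler_trunc 0 N)`_s = (s == 0%N)%:R.
Proof. by rewrite /euler_trunc big_geq // coef1. Qed.

Lemma coef_euler_truncS k N s : (s < N)%N ->
  (euler_trunc k.+1 N)`_s = (euler_trunc k N)`_s
    + (if (k.+1 <= s)%N then (euler_trunc k.+1 N)`_(s - k.+1) else 0).
Proof.
move=> lt_sN.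
have : eq_modX N (euler_trunc k.+1 N * (1 - 'X^(k.+1))) (euler_trunc k N).
  rewrite /euler_trunc big_nat_recr //= -mulrA [_ * (1 - _)]mulrC.
  rewrite -[X in eq_modX _ _ X]mulr1.
  by apply: eq_modX_mul; [exact: eq_modX_refl | exact: geom_truncK].
move=> /(_ s lt_sN) <-; rewrite mulrBr mulr1 coefB coefMXn.
by case: ltnP => _; rewrite ?subr0 ?subrK.
Qed.

(** * The Durfee decomposition *)

(* [(part_gf l a b)`_n] is the number of nonincreasing sequences of [l]
   integers in [a, b] summing to [n]; [x] ranges over the first entry. *)
Fixpoint part_gf (l a b : nat) : {poly int} :=
  if l is l'.+1 then \sum_(a <= x < b.+1) 'X^x * part_gf l' a x else 1.

Lemma part_gfS l a b :
  part_gf l.+1 a b = \sum_(a <= x < b.+1) 'X^x * part_gf l a x.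
Proof. by []. Qed.

Lemma part_gf0 a b : part_gf 0 a b = 1.
Proof. by []. Qed.

Arguments part_gf : simpl never.

Lemma part_gf_small l a b : (b < a)%N -> part_gf l.+1 a b = 0.
Proof. by move=> lt_ba; rewrite part_gfS big_geq. Qed.

Lemma part_gfSS_widen l a c b : (c <= a)%N ->
  part_gf l.+2 a b = \sum_(c <= x < b.+1) 'X^x * part_gf l.+1 a x.
Proof.
move=> le_ca; rewrite part_gfS (@big_nat_widenl _ _ _ a c) // big_mkcondr /=.
by apply: eq_bigr => x _; case: leqP => // lt_xa; rewrite part_gf_small ?mulr0.
Qed.

Lemma part_gf_shift l a m : part_gf l a (a + m) = 'X^(l * a) * part_gf l 0%N m.
Proof.
elim: l m => [|l IH] m; first by rewrite mul0n expr0 mul1r !part_gf0.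
rewrite !part_gfS -{1}(add0n a) big_addn mulr_sumr -addnS addKn.
apply: eq_bigr => y _; rewrite [(y + a)%N]addnC IH mulSn !exprD -!mulrA.
by congr (_ * _); rewrite mulrCA.
Qed.

Lemma part_gf_00 l : part_gf l 0%N 0%N = 1.
Proof.
by elim: l => [|l IH]; rewrite ?part_gf0 //; rewrite part_gfS big_nat1 IH mulr1.
Qed.

Lemma part_gf0S l m :
  part_gf l.+1 0%N m.+1 = part_gf l 0%N m.+1 + 'X^(l.+1) * part_gf l.+1 0%N m.
Proof.
elim: l m => [|l IH] m.
  rewrite !part_gfS big_nat_recl // mulr_sumr !part_gf0 mulr1; congr (_ + _).
  by apply: eq_bigr => y _; rewrite !part_gf0 !mulr1 exprS.
rewrite part_gfS big_nat_recl //= part_gf_00 mulr1.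
rewrite [part_gf l.+1 0%N m.+1]part_gfS [in RHS]big_nat_recl //= part_gf_00 mulr1.
rewrite [part_gf l.+2 0%N m]part_gfS mulr_sumr -addrA -big_split /=; congr (_ + _).
by apply: eq_bigr => y _; rewrite IH !exprS; ring.
Qed.

(* For [s <= m] the bound [m] is void and, by conjugation, both sides count
   the partitions of [s] into at most [k] parts; we compare recurrences. *)
Lemma coef_part_gf_euler k m N s : (s <= m)%N -> (s < N)%N ->
  (part_gf k 0%N m)`_s = (euler_trunc k N)`_s.
Proof.
elim: k m s => [|k IHk] m s; first by rewrite part_gf0 coef1 coef_euler_trunc0.
elim: m s => [|m IHm] s le_sm lt_sN; rewrite coef_euler_truncS //.
  case: s le_sm lt_sN => // _ lt0N.
  by rewrite -(IHk 0%N) // !part_gf_00 addr0.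
rewrite part_gf0S coefD coefXnM IHk //.
by case: ltnP => // le_ks; rewrite IHm //; lia.
Qed.

(* [(bounded_gf k L)`_n] counts the partitions of [n] into fewer than [L]
   parts, each at most [k]. *)
Definition bounded_gf (k L : nat) : {poly int} := \sum_(l < L) part_gf l 1 k.

Lemma bounded_gfS k L :
  bounded_gf k L.+1 = 1 + \sum_(1 <= x < k.+1) 'X^x * bounded_gf x L.
Proof.
rewrite /bounded_gf big_ord_recl part_gf0; congr (_ + _).
under eq_bigr => l _ do rewrite part_gfS.
by rewrite exchange_big; apply: eq_bigr => x _; rewrite mulr_sumr.
Qed.

Lemma bounded_gf0 L : bounded_gf 0 L.+1 = 1.
Proof. by rewrite bounded_gfS big_geq ?addr0. Qed.

Lemma bounded_gf_rec k L :
  bounded_gf k.+1 L.+1 = bounded_gf k L.+1 + 'X^(k.+1) * bounded_gf k.+1 L.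
Proof. by rewrite !bounded_gfS big_nat_recr //= addrA. Qed.

Lemma coef_bounded_gf_euler k L N s : (s < L)%N -> (s < N)%N ->
  (bounded_gf k L)`_s = (euler_trunc k N)`_s.
Proof.
elim: k L s => [|k IHk] L s lt_sL lt_sN.
  by case: L lt_sL => // L _; rewrite bounded_gf0 coef1 coef_euler_trunc0.
elim: L s lt_sL lt_sN => // L IHL s lt_sL lt_sN.
rewrite bounded_gf_rec coef_euler_truncS // coefD coefXnM IHk //.
by case: ltnP => // le_ks; rewrite IHL //; lia.
Qed.

(* Either all parts are at most [j], or [i.+1] is the last index [t] with
   [lambda_t >= j + t]; for [j = 0] it is the side of the Durfee square. *)
Lemma part_gf_durfee l j m : part_gf l 1 m = part_gf l 1 (minn j m) +
  \sum_(i < l) part_gf i.+1 (j + i).+1 m * part_gf (l - i.+1) 1 (j + i).+1.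
Proof.
elim: l j m => [|l IH] j m; first by rewrite !part_gf0 big_ord0 addr0.
have above_j : \sum_((minn j m).+1 <= x < m.+1) 'X^x * part_gf l 1 x
    = \sum_(j.+1 <= x < m.+1) 'X^x * part_gf l 1 x.
  by have [//|lt_mj] := leqP j m; rewrite !big_geq // ltnS ltnW.
rewrite part_gfS (@big_cat_nat _ _ _ (minn j m).+1) //=; last by rewrite ltnS geq_minr.
rewrite -part_gfS above_j big_ord_recl; congr (_ + _).
rewrite (eq_big_nat _ _ (F2 := fun x => 'X^x * part_gf l 1 j.+1 +
    \sum_(i < l) 'X^x * part_gf i.+1 (j + i).+2 x * part_gf (l - i.+1) 1 (j + i).+2))
    => [|x /andP[lt_jx _]]; last first.
  rewrite (IH j.+1 x) (minn_idPl lt_jx) mulrDr mulr_sumr.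
  by congr (_ + _); apply: eq_bigr => i _; rewrite addSn mulrA.
rewrite big_split /= exchange_big; congr (_ + _).
  rewrite addn0 subn1 part_gfS mulr_suml.
  by apply: eq_bigr => x _; rewrite part_gf0 mulr1.
apply: eq_bigr => i _; rewrite /bump add1n addnS subSS.
by rewrite (@part_gfSS_widen _ _ j.+1) ?big_distrl //; lia.
Qed.

Definition count_tuples l b (P : pred (seq nat)) : nat :=
  (\sum_(t : l.-tuple 'I_b) P (map val t))%N.

Lemma card_tuples_pred l b (P : pred (seq nat)) :
  #|[set t : l.-tuple 'I_b | P (map val t)]| = count_tuples l b P.
Proof.
rewrite -sum1_card /count_tuples big_mkcond /=.
by apply: eq_bigr => t _; rewrite inE; case: (P _).
Qed.

Lemma count_tuples0 b P : count_tuples 0 b P = P [::].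
Proof.
rewrite /count_tuples (eq_bigr (fun _ => (P [::] : nat))) => [|t _].
  by rewrite sum_nat_const card_tuple expn0 mul1n.
by rewrite tuple0.
Qed.

Lemma count_tuplesS l b P :
  count_tuples l.+1 b P
    = (\sum_(x : 'I_b) count_tuples l b (fun s => P (val x :: s)))%N.
Proof.
rewrite /count_tuples pair_big /=.
pose cons_tuple (p : 'I_b * l.-tuple 'I_b) := [tuple of p.1 :: p.2].
have cons_bij : bijective cons_tuple.
  exists (fun t : l.+1.-tuple 'I_b => (thead t, [tuple of behead t])).
    by move=> [x t]; rewrite /cons_tuple /= theadE; congr (_, _); apply: val_inj.
  by move=> t; rewrite /cons_tuple /= [in RHS](tuple_eta t).
by rewrite (reindex cons_tuple) //; apply: onW_bij.
Qed.

Lemma eq_count_tuples l b (P Q : pred (seq nat)) :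
  P =1 Q -> count_tuples l b P = count_tuples l b Q.
Proof. by move=> PQ; apply: eq_bigr => t _; rewrite PQ. Qed.

Lemma count_tuples_andl l b (c : bool) (P : pred (seq nat)) :
  count_tuples l b (fun s => c && P s) = (c * count_tuples l b P)%N.
Proof. by case: c; rewrite /count_tuples ?mul1n ?mul0n // big1. Qed.

Definition bounded_partition n m (s : seq nat) : bool :=
  [&& sorted geq s, all (fun y => 0 < y <= m)%N s & sumn s == n].

Lemma bounded_partition_cons n m x s : bounded_partition n m (x :: s) =
  [&& (0 < x <= m)%N, (x <= n)%N & bounded_partition (n - x)%N x s].
Proof.
have geq_trans : transitive geq by move=> a b c ba cb; apply: leq_trans cb ba.
rewrite /bounded_partition /= (path_sortedE geq_trans).
case x_in : (0 < x <= m)%N; last by rewrite !andbF.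
have -> : all (fun y => 0 < y <= x)%N s
          = all (geq x) s && all (fun y => 0 < y <= m)%N s.
  by rewrite -all_predI; apply: eq_all => y /=; move: x_in; lia.
have -> : ((x + sumn s == n) = (x <= n) && (sumn s == n - x))%N by apply/idP/idP; lia.
by case: (all (geq x) s) (all (fun y => 0 < y <= m)%N s) (sorted geq s)
  (sumn s == n - x)%N (x <= n)%N => [] [] [] [] [].
Qed.

Lemma is_partition_bounded n s : is_partition n s = bounded_partition n n s.
Proof.
have le_sumn y : y \in s -> (y <= sumn s)%N.
  elim: s => //= z s IH; rewrite in_cons => /predU1P[-> | /IH le_y].
    exact: leq_addr.
  exact: leq_trans le_y (leq_addl _ _).
rewrite /is_partition /bounded_partition; case: eqP => [<-|]; last by rewrite !andbF.
by rewrite !andbT; congr (_ && _); apply: eq_in_all => y /le_sumn ->; rewrite andbT.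
Qed.

Lemma count_bounded_partitions l b n m : (n < b)%N -> (m < b)%N ->
  (count_tuples l b (bounded_partition n m))%:R = (part_gf l 1 m)`_n :> int.
Proof.
elim: l n m => [|l IH] n m lt_nb lt_mb.
  by rewrite count_tuples0 part_gf0 coef1 /bounded_partition /= eq_sym.
rewrite count_tuplesS natr_sum part_gfS coef_sum.
rewrite (@big_nat_widenl _ _ _ 1 0) // (@big_nat_widen _ _ _ 0 m.+1 b) //.
rewrite big_mkcond big_mkord; apply: eq_bigr => x _ /=.
rewrite (eq_count_tuples _ _ (bounded_partition_cons n m x)) !count_tuples_andl.
rewrite ltnS coefXnM; case: (0 < x <= m)%N; last by rewrite mul0n.
case: ltnP => [_ | le_xn]; first by rewrite mul0n.
rewrite !mul1n IH // ?(leq_ltn_trans le_xn lt_nb) //.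
exact: leq_ltn_trans (leq_subr _ _) lt_nb.
Qed.

Lemma npart_part_gf n : (npart n)%:Z = \sum_(l < n.+1) (part_gf l 1 n)`_n.
Proof.
rewrite -natz /npart natr_sum; apply: eq_bigr => l _.
rewrite card_tuples_pred (eq_count_tuples _ _ (is_partition_bounded n)).
exact: count_bounded_partitions.
Qed.

Lemma sum_triangle (V : nmodType) (F : nat -> nat -> V) n :
  \sum_(l < n.+1) \sum_(i < l) F i (l - i.+1)%N
    = \sum_(i < n) \sum_(l < n - i) F i l.
Proof.
elim: n => [|n IH]; first by rewrite big_ord_recl !big_ord0 addr0.
rewrite big_ord_recr /= IH [RHS]big_ord_recr /= subSnn big_ord1.
rewrite [X in _ + X = _]big_ord_recr /= subnn addrA -big_split /=; congr (_ + _).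
by apply: eq_bigr => i _; rewrite subSS subSn ?big_ord_recr // ltnW.
Qed.

Lemma coef_part_gf_max0 l n : (0 < n)%N -> (part_gf l 1 0)`_n = 0.
Proof.
by case: l => [|l] n_gt0; rewrite ?part_gf0 ?coef1 ?gtn_eqF // part_gf_small ?coef0.
Qed.

Lemma coef_durfee_term k n : (0 < k <= n)%N ->
  (part_gf k k n * bounded_gf k (n - k.-1))`_n
    = if (k * k <= n)%N then Ek k (n - k * k) else 0.
Proof.
move=> /andP[k_gt0 le_kn]; have le_k_kk : (k <= k * k)%N by rewrite leq_pmulr.
rewrite -(subnKC le_kn) part_gf_shift subnKC // -mulrA coefXnM ltnNge.
case: leqP => // le_kk_n.
rewrite (@Ek_euler_trunc _ n.+1) ?ltnS ?leq_subr // expr2 !coefM.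
apply: eq_bigr => j _; have := ltn_ord j; rewrite ltnS => le_j.
rewrite (@coef_part_gf_euler _ _ n.+1) ?(@coef_bounded_gf_euler _ _ n.+1) //; lia.
Qed.

Lemma npart_durfee n : (0 < n)%N ->
  (npart n)%:Z = \sum_(1 <= k < n.+1 | (k * k <= n)%N) Ek k (n - k * k)%N.
Proof.
move=> n_gt0; rewrite npart_part_gf.
under eq_bigr => l _.
  rewrite (part_gf_durfee l 0 n) min0n coefD coef_part_gf_max0 // add0r coef_sum.
  over.
rewrite (sum_triangle
  (fun i l => (part_gf i.+1 (0 + i).+1 n * part_gf l 1 (0 + i).+1)`_n)).
under eq_bigr => i _.
  rewrite -coef_sum -mulr_sumr add0n -/(bounded_gf _ _) coef_durfee_term ?ltn_ord //.
  over.
by rewrite [RHS]big_add1 /= big_mkord [RHS]big_mkcond.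
Qed.

(** * Quasi-polynomiality *)

Definition fwd_diff (V : zmodType) (g : nat -> V) : nat -> V := fun m => g m.+1 - g m.

Lemma coef_1subXn_exp (R : nzRingType) (T : {poly R}) (g : nat -> R) L r D m :
  (forall i, (i <= m + D)%N -> T`_(r + i * L) = g i) ->
  ((1 - 'X^L) ^+ D * T)`_(r + (m + D) * L) = iter D (@fwd_diff R) g m.
Proof.
elim: D m => [|D IH] m Tg; first by rewrite expr0 mul1r Tg ?addn0.
have -> : (r + (m + D.+1) * L = r + (m.+1 + D) * L)%N by rewrite addSnnS.
have le_L : (L <= r + (m.+1 + D) * L)%N by nia.
rewrite exprS -mulrA mulrBl mul1r coefB coefXnM ltnNge le_L /=.
have -> : (r + (m.+1 + D) * L - L = r + (m + D) * L)%N by nia.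
rewrite !IH ?iterS // => i le_i; apply: Tg; lia.
Qed.

Lemma hockey_stick m j : (\sum_(i < m) 'C(i, j))%N = 'C(m, j.+1).
Proof. by elim: m => [|m IH]; rewrite ?big_ord0 // big_ord_recr /= IH. Qed.

Lemma newton_forward (V : zmodType) D (g : nat -> V) :
    (forall m, iter D (@fwd_diff V) g m = 0) ->
  forall m, g m = \sum_(j < D) iter j (@fwd_diff V) g 0%N *+ 'C(m, j).
Proof.
elim: D g => [|D IH] g gD m; first by rewrite big_ord0; exact: gD.
have dgD m' : iter D (@fwd_diff V) (fwd_diff g) m' = 0 by rewrite -iterSr gD.
have -> : g m = g 0%N + \sum_(i < m) fwd_diff g i.
  by rewrite -(big_mkord xpredT) telescope_sumr // addrC subrK.
rewrite big_ord_recl bin0 mulr1n; congr (_ + _).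
under eq_bigr => i _ do rewrite (IH _ dgD i).
rewrite exchange_big /=; apply: eq_bigr => j _.
by rewrite sumrMnr hockey_stick /bump add0n add1n -iterSr -iterS.
Qed.

Lemma natr_ffact (R : pzRingType) m j : (m ^_ j)%:R = \prod_(t < j) (m%:R - t%:R : R).
Proof.
elim: j => [|j IH]; first by rewrite big_ord0 ffactn0.
rewrite big_ord_recr /= -IH ffactnSr natrM.
have [le_jm | lt_mj] := leqP j m; first by rewrite natrB.
by rewrite ffact_small // !mul0r.
Qed.

Definition binom_poly (F : numFieldType) (j : nat) : {poly F} :=
  (j`!%:R)^-1 *: \prod_(t < j) ('X - t%:R%:P).

Lemma binom_poly_nat (F : numFieldType) j m : (binom_poly F j).[m%:R] = 'C(m, j)%:R.
Proof.
rewrite hornerZ horner_prod; under eq_bigr => t _ do rewrite hornerXsubC.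
rewrite -natr_ffact -bin_ffact natrM mulrC mulfK //.
by rewrite pnatr_eq0 -lt0n fact_gt0.
Qed.

Definition newton_poly (F : numFieldType) D (g : nat -> int) : {poly F} :=
  \sum_(j < D) (iter j (@fwd_diff int) g 0%N)%:~R *: binom_poly F j.

Lemma newton_polyE (F : numFieldType) D (g : nat -> int) :
    (forall m, iter D (@fwd_diff int) g m = 0) ->
  forall m, (newton_poly F D g).[m%:R] = (g m)%:~R.
Proof.
move=> gD m; rewrite (newton_forward gD m) rmorph_sum horner_sum.
by apply: eq_bigr => j _; rewrite hornerZ binom_poly_nat mulr_natr rmorphMn.
Qed.

Lemma Lk_gt0 k : (0 < Lk k)%N.
Proof.
rewrite /Lk big_seq; elim/big_ind: _ => // [x y|i]; first by rewrite lcmn_gt0 => ->.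
by rewrite mem_index_iota => /andP[].
Qed.

Lemma dvdn_Lk k i : (0 < i <= k)%N -> (i %| Lk k)%N.
Proof.
move=> i_in; rewrite /Lk (bigD1_seq i) ?iota_uniq ?dvdn_lcml //.
by rewrite mem_index_iota ltnS.
Qed.

Lemma coef_1subXLk_euler_eq0 k N j : (0 < k)%N -> (k * (2 * (Lk k).-1) < j < N)%N ->
  ((1 - 'X^(Lk k)) ^+ (2 * k) * euler_trunc k N ^+ 2)`_j = 0.
Proof.
move=> k_gt0 /andP[lt_deg_j lt_jN]; set L := Lk k.
have -> : (1 - 'X^L) ^+ (2 * k) * euler_trunc k N ^+ 2
    = \prod_(1 <= i < k.+1) ((1 - 'X^L) * geom_trunc int i N) ^+ 2.
  by rewrite prodrXl big_split prodr_const_nat subn1 /= exprMn -exprM mulnC.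
have approx : eq_modX N (\prod_(1 <= i < k.+1) ((1 - 'X^L) * geom_trunc int i N) ^+ 2)
                        (\prod_(1 <= i < k.+1) geom_sum int i L ^+ 2).
  rewrite big_seq [X in eq_modX _ _ X]big_seq.
  apply: (big_ind2 (eq_modX N)) => [|P P' Q Q'|i]; first exact: eq_modX_refl.
    exact: eq_modX_mul.
  rewrite mem_index_iota => /andP[i_gt0 lt_ik]; rewrite !expr2.
  have dvd_iL : (i %| L)%N by apply: dvdn_Lk; rewrite i_gt0 -ltnS.
  by apply: eq_modX_mul; apply: eq_modX_geom_sum.
have size_term i : ((size (geom_sum int i L ^+ 2)).-1 <= 2 * L.-1)%N.
  have := size_poly_exp_leq (geom_sum int i L) 2; have := size_geom_sum int i L; nia.
have deg_prod :
    ((size (\prod_(1 <= i < k.+1) geom_sum int i L ^+ 2)%R).-1 <= k * (2 * L.-1))%N.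
  apply: leq_trans (size_prod_leq _ _ _) _.
  apply: (@leq_trans (\sum_(1 <= i < k.+1) 2 * L.-1)%N); first exact: leq_sum.
  by rewrite sum_nat_const_nat subn1.
rewrite approx // nth_default // (leq_trans (leqSpred _)) //.
exact: leq_ltn_trans deg_prod lt_deg_j.
Qed.

Lemma Ek_quasi_polynomial k : (0 < k)%N -> exists P : nat -> {poly rat},
  forall x : nat, (Ek k x)%:~R = (P (x %% Lk k)%N).[x%:R].
Proof.
move=> k_gt0; set L := Lk k; have L_gt0 : (0 < L)%N := Lk_gt0 k.
pose g r m := Ek k (r + m * L).
have g_diff0 r m : iter (2 * k) (@fwd_diff int) (g r) m = 0.
  set j := (r + (m + 2 * k) * L)%N.
  rewrite -(@coef_1subXn_exp _ (euler_trunc k j.+1 ^+ 2) _ L r) => [|i le_i].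
    by rewrite coef_1subXLk_euler_eq0 //; apply/andP; split; nia.
  by rewrite /g (@Ek_euler_trunc _ j.+1) // ltnS; nia.
exists (fun r => newton_poly rat (2 * k) (g r) \Po ((L%:R)^-1 *: ('X - r%:R%:P))).
move=> x; rewrite horner_comp.
have -> : ((L%:R)^-1 *: ('X - (x %% L)%:R%:P)).[x%:R] = (x %/ L)%:R :> rat.
  rewrite hornerZ hornerXsubC {1}(divn_eq x L) natrD addrK natrM mulrC mulfK //.
  by rewrite pnatr_eq0 -lt0n.
by rewrite newton_polyE // /g addnC -divn_eq.
Qed.

Theorem theorem8p1 :
  (forall k : nat, (1 <= k)%N ->
     exists P : nat -> {poly rat},
       forall x : nat, (Ek k x)%:~R = (P (x %% Lk k)%N).[x%:R]) /\
  (forall n : nat, (1 <= n)%N ->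
     ((npart n)%:Z = \sum_(1 <= k < n.+1 | (k * k <= n)%N) Ek k (n - k * k)%N)).
Proof. by split; [exact: Ek_quasi_polynomial | exact: npart_durfee]. Qed.
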